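(* For every $\beta\in(0,1)$ there is a constant $c$ such that for every $\varepsilon>0$, all positive integers $d$ and $m\le n$ with $d$ dividing $n$, every $x_1,\dots,x_n\in[-1,1]^d$, and every public-string-oblivious attacker $M$, \[ \Pr\left[\left\|\mathrm{Manip}_{m,n}(\mathtt{EST}\infty_{n,d,\varepsilon},\vec x,M)-\frac1n\sum_{i=1}^n x_i\right\|_\infty< c\cdot\frac{e^\varepsilon+1}{e^\varepsilon-1}\left(\sqrt{\frac dn\log\frac d\beta}+\frac mn\right)\right]\ge 1-\beta . \]
   Context: Randomized response: for $b\in\{\pm1\}$, $R^{RR}_\varepsilon(b)$ outputs $b\cdot\frac{e^\varepsilon+1}{e^\varepsilon-1}$ with probability $\frac{e^\varepsilon}{e^\varepsilon+1}$ and $-b\cdot\frac{e^\varepsilon+1}{e^\varepsilon-1}$ otherwise. Protocol $\mathtt{EST}\infty_{n,d,\varepsilon}$: the public randomness is a uniformly random partition $\pi$ of $[n]$ into $d$ groups $\pi(1),\dots,\pi(d)$ of size $n/d$ each. User $i$ with data $x_i\in[-1,1]^d$ in group $g(i)$ computes $x_i'\in\{\pm1\}$ with $\Pr[x_i'=+1]=\frac12+\frac{x_{i,g(i)}}{2}$, and sends $y_i\sim R^{RR}_\varepsilon(x_i')$. The aggregator outputs $z\in\mathbb R^d$ with $z_g=\frac dn\sum_{i\in\pi(g)}y_i$. Manipulation game $\mathrm{Manip}_{m,n}(\Pi,\vec x,M)$ for a protocol $\Pi$ with public randomness $S$, randomizers $R_i$ with message set $\mathcal Y$ and aggregator $A$: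 $S$ is sampled; the attacker $M$ chooses a set $C\subseteq[n]$ with $|C|=m$ and messages $y_i\in\mathcal Y$ for $i\in C$ (possibly depending on $\vec x$, $S$, and its own randomness); each $i\notin C$ independently sends $y_i\sim R_i(x_i,S)$; the output is $A(y_1,\dots,y_n,S)$. $M$ is public-string-oblivious if $C$ is chosen independently of $S$. Here the message set is $\{\pm\frac{e^\varepsilon+1}{e^\varepsilon-1}\}$. *)

From Stdlib Require Import Reals.
From mathcomp Require Import all_boot.
Set Implicit Arguments. Unset Strict Implicit. Unset Printing Implicit Defensive.
Local Open Scope R_scope.

Definition rr_scale (eps : R) : R := (exp eps + 1) / (exp eps - 1).

Definition msg (eps : R) (b : bool) : R := (if b then 1 else -1) * rr_scale eps.

(* Public randomness: a labeled partition pi of [n] into d groups of size n/d,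
   encoded as the group-assignment map g : [n] -> [d] (pi(j) = g^-1(j)). *)
Definition partitions (n d : nat) : {set {ffun 'I_n -> 'I_d}} :=
  [set g : {ffun 'I_n -> 'I_d} | [forall j : 'I_d, #|[set i | g i == j]| == n %/ d]].

(* Private randomness of an honest user: a pair (x', keep) of bits.
   x' = +1 with probability 1/2 + x/2;
   RR keeps the sign (outputs b * scale) with probability e^eps/(e^eps+1). *)
Definition coin_weight (eps xv : R) (c : bool * bool) : R :=
  (if c.1 then 1/2 + xv/2 else 1/2 - xv/2) *
  (if c.2 then exp eps / (exp eps + 1) else 1 / (exp eps + 1)).

Definition honest_bit (c : bool * bool) : bool := if c.2 then c.1 else ~~ c.1.

(* A (deterministic) public-string-oblivious attacker: a set C of corrupted
   users (chosen independently of the public string) and, for every value of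
   the public string, the messages of the corrupted users.  A randomized such
   attacker is a probability distribution on this finite type. *)
Definition attacker (n d : nat) : finType :=
  ({set 'I_n} * {ffun {ffun 'I_n -> 'I_d} -> {ffun 'I_n -> bool}})%type.

Definition manip_output (n d : nat) (eps : R) (a : attacker n d)
  (g : {ffun 'I_n -> 'I_d}) (coins : {ffun 'I_n -> bool * bool}) (j : 'I_d) : R :=
  INR d / INR n *
  \big[Rplus/0]_(i | g i == j)
     (msg eps (if i \in a.1 then a.2 g i else honest_bit (coins i))).

Definition mean (n d : nat) (x : 'I_n -> 'I_d -> R) (j : 'I_d) : R :=
  / INR n * \big[Rplus/0]_(i : 'I_n) (x i j).

Definition linf (d : nat) (v : 'I_d -> R) : R := \big[Rmax/0]_(j : 'I_d) Rabs (v j).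

Definition indicator (P : Prop) (dec : {P} + {~ P}) : R := if dec then 1 else 0.

(* Pr[ || Manip_{m,n}(EST_{n,d,eps}, x, M) - mean ||_inf < bound ],
   where the attacker M is given by the distribution w on attacker n d,
   independent of the public partition (uniform on partitions n d) and of the
   honest users' coins (independent across users). *)
Definition manip_prob (n d : nat) (eps : R) (x : 'I_n -> 'I_d -> R)
  (w : attacker n d -> R) (bound : R) : R :=
  \big[Rplus/0]_(a : attacker n d) (w a *
   \big[Rplus/0]_(g in partitions n d) (/ INR #|partitions n d| *
    \big[Rplus/0]_(coins : {ffun 'I_n -> bool * bool})
      ((\big[Rmult/1]_(i : 'I_n) coin_weight eps (x i (g i)) (coins i)) *
       indicator
        (Rlt_dec (linf (fun j => manip_output eps a g coins j - mean x j)) bound)))).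

Definition oblivious_attacker (n d m : nat) (w : attacker n d -> R) : Prop :=
  (forall a, 0 <= w a) /\ \big[Rplus/0]_(a : attacker n d) w a = 1 /\
  (forall a, w a <> 0 -> #|a.1| = m).

From Stdlib Require Import Reals Lra Lia Psatz.
From HB Require Import structures.
From mathcomp Require Import all_boot fingroup perm zify.
Set Implicit Arguments. Unset Strict Implicit.
Local Open Scope R_scope.

(* Fix an attacker; it corrupts a set C of m users without looking at the partition.
   With k = n/d users per group and s = (e^eps+1)/(e^eps-1), the error in coordinate j
   is 1/k times the sum of
   (a) the influence of the corrupted users, at most 2s |C /\ group j|;
   (b) the randomized-response noise of group j, a sum of k independent centred terms
       bounded by 2s;
   (c) the sampling error sum_(i in group j) x_ij - (1/d) sum_i x_ij.
   A uniformly random balanced partition puts any t fixed users into group j with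
   probability at most d^-t, so sums over group j have the exponential moments of
   independent sampling at rate 1/d; this controls |C /\ group j| - m/d and (c), and
   Hoeffding's lemma controls (b).  Chernoff bounds at deviation
   q = sqrt (ln (5d/beta) / k) for five tail events per coordinate, and a union bound over
   the d coordinates, give failure probability 5d e^(-kq^2) = beta; outside the failure
   event the error is below 2s m/n + 18 s q = O(s (sqrt ((d/n) ln (d/beta)) + m/n)). *)

Lemma Rplus_associative : associative Rplus.
Proof. by move=> *; rewrite Rplus_assoc. Qed.
Lemma Rmult_associative : associative Rmult.
Proof. by move=> *; rewrite Rmult_assoc. Qed.

HB.instance Definition _ :=
  Monoid.isComLaw.Build R 0 Rplus Rplus_associative Rplus_comm Rplus_0_l.
HB.instance Definition _ :=
  Monoid.isComLaw.Build R 1 Rmult Rmult_associative Rmult_comm Rmult_1_l.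
HB.instance Definition _ := Monoid.isMulLaw.Build R 0 Rmult Rmult_0_l Rmult_0_r.
HB.instance Definition _ :=
  Monoid.isAddLaw.Build R Rmult Rplus Rmult_plus_distr_r Rmult_plus_distr_l.

Section RealBigops.
Variables (I : Type) (r : seq I) (P : pred I).

Lemma sumR_ge0 (F : I -> R) : (forall i, P i -> 0 <= F i) ->
  0 <= \big[Rplus/0]_(i <- r | P i) F i.
Proof.
by move=> F_ge0; apply: (big_ind (fun a => 0 <= a)) => //; [lra | move=> *; lra].
Qed.

Lemma sumR_le (F G : I -> R) : (forall i, P i -> F i <= G i) ->
  \big[Rplus/0]_(i <- r | P i) F i <= \big[Rplus/0]_(i <- r | P i) G i.
Proof.
by move=> FG; apply: (big_ind2 (fun a b => a <= b)) => //; [lra | move=> *; lra].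
Qed.

Lemma prodR_le (F G : I -> R) : (forall i, P i -> 0 <= F i <= G i) ->
  \big[Rmult/1]_(i <- r | P i) F i <= \big[Rmult/1]_(i <- r | P i) G i.
Proof.
move=> FG; suff [] : 0 <= \big[Rmult/1]_(i <- r | P i) F i
                     <= \big[Rmult/1]_(i <- r | P i) G i by [].
by apply: (big_ind2 (fun a b => 0 <= a <= b)) => //; [lra | move=> *; nra].
Qed.

Lemma prodR_ge0 (F : I -> R) : (forall i, P i -> 0 <= F i) ->
  0 <= \big[Rmult/1]_(i <- r | P i) F i.
Proof.
by move=> F_ge0; apply: (big_ind (fun a => 0 <= a)) => //; [lra | move=> *; nra].
Qed.

Lemma sumR_distrr c (F : I -> R) :
  c * \big[Rplus/0]_(i <- r | P i) F i = \big[Rplus/0]_(i <- r | P i) (c * F i).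
Proof. exact: big_distrr. Qed.

Lemma sumR_distrl c (F : I -> R) :
  \big[Rplus/0]_(i <- r | P i) F i * c = \big[Rplus/0]_(i <- r | P i) (F i * c).
Proof. exact: big_distrl. Qed.

Lemma sumR_split (F G : I -> R) :
  \big[Rplus/0]_(i <- r | P i) (F i + G i) =
  \big[Rplus/0]_(i <- r | P i) F i + \big[Rplus/0]_(i <- r | P i) G i.
Proof. exact: big_split. Qed.

Lemma exp_sumR (F : I -> R) :
  exp (\big[Rplus/0]_(i <- r | P i) F i) = \big[Rmult/1]_(i <- r | P i) exp (F i).
Proof. by apply: (big_morph exp); [move=> *; apply: exp_plus | apply: exp_0]. Qed.

Lemma Rabs_sumR_le (F : I -> R) :
  Rabs (\big[Rplus/0]_(i <- r | P i) F i) <= \big[Rplus/0]_(i <- r | P i) Rabs (F i).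
Proof.
apply: (big_ind2 (fun a b => Rabs a <= b)) => [|a b u v ? ?|i _].
- by rewrite Rabs_R0; lra.
- by apply: Rle_trans (Rabs_triang _ _) _; lra.
- exact: Rle_refl.
Qed.
End RealBigops.

Lemma iter_Rplus k c : iter k (Rplus c) 0 = INR k * c.
Proof.
elim: k => [|k IH]; first by rewrite /= Rmult_0_l.
by rewrite iterS IH S_INR; ring.
Qed.

Lemma sumR_const (T : finType) (A : {pred T}) c :
  \big[Rplus/0]_(i in A) c = INR #|A| * c.
Proof. by rewrite big_const iter_Rplus. Qed.

Lemma sumR_const_ord n c : \big[Rplus/0]_(i < n) c = INR n * c.
Proof. by rewrite big_const_ord iter_Rplus. Qed.

Lemma iter_Rmult k c : iter k (Rmult c) 1 = c ^ k.
Proof. by elim: k => [|k IH] //; rewrite iterS IH. Qed.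

Lemma prodR_const (T : finType) (A : {pred T}) c :
  \big[Rmult/1]_(i in A) c = c ^ #|A|.
Proof. by rewrite big_const iter_Rmult. Qed.

Lemma INR_expn m t : INR (m ^ t) = INR m ^ t.
Proof. by elim: t => [|t IH] //; rewrite expnS mult_INR IH. Qed.

Lemma prodR_add1_subsets (I : finType) (A : {set I}) (c : I -> R) :
  \big[Rmult/1]_(i in A) (1 + c i) =
  \big[Rplus/0]_(S : {set I} | S \subset A) \big[Rmult/1]_(i in S) c i.
Proof.
transitivity (\big[Rmult/1]_i ((if i \in A then c i else 0) + 1)).
  by rewrite big_mkcond /=; apply: eq_bigr => i _; case: (i \in A); lra.
rewrite bigA_distr [RHS]big_mkcond; apply: eq_bigr => S _.
case: ifP => [/subsetP sub | /subsetPn [i iS iA]].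
  rewrite [RHS]big_mkcond; apply: eq_bigr => i _; case: ifP => // iS.
  by rewrite (sub i iS).
by rewrite (bigD1 i) //= iS (negbTE iA) Rmult_0_l.
Qed.

Lemma sumR_bool2 (F : bool * bool -> R) : \big[Rplus/0]_c F c =
  F (true, true) + F (true, false) + (F (false, true) + F (false, false)).
Proof.
rewrite (eq_bigr (fun c => F (c.1, c.2))); last by case.
by rewrite -(pair_bigA _ (fun a b => F (a, b))) !big_bool.
Qed.

Lemma exp_le x y : x <= y -> exp x <= exp y.
Proof. by case/Rle_lt_or_eq_dec => [/exp_increasing|->]; lra. Qed.

Lemma ln_le x y : 0 < x -> x <= y -> ln x <= ln y.
Proof. by move=> x_gt0; case/Rle_lt_or_eq_dec => [/(ln_increasing _ _ x_gt0)|->]; lra. Qed.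

Lemma exp_le_quadratic y : y <= 1/2 -> exp y <= 1 + y + 2 * y ^ 2.
Proof.
move=> y_le; have := exp_ineq1_le (- y); rewrite exp_Ropp => ey.
have ey_gt0 := exp_pos y.
have : (1 - y) * exp y <= 1.
  have := Rmult_le_compat_r (exp y) _ _ (Rlt_le _ _ ey_gt0) ey.
  by rewrite Rinv_l; lra.
nra.
Qed.

Lemma exp_shift lam X c mu :
  exp (lam * (X - c) - mu) = exp (lam * X) * exp (- (lam * c) - mu).
Proof. by rewrite -exp_plus; congr exp; ring. Qed.

Lemma lt_of_exp_lt1 lam X t : 0 <= lam -> exp (lam * X - lam * t) < 1 -> X < t.
Proof.
move=> lam_ge0 e_lt1; apply: Rnot_le_lt => tX.
have : exp 0 <= exp (lam * X - lam * t) by apply: exp_le; nra.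
rewrite exp_0; lra.
Qed.

Section HoeffdingLemma.
Variables (T : finType) (p f : T -> R) (mu : R).
Hypotheses (p_ge0 : forall t, 0 <= p t) (p_sum1 : \big[Rplus/0]_t p t = 1)
  (p_mean : \big[Rplus/0]_t (p t * f t) = mu).

Lemma mgf_centered_le b lam : (forall t, Rabs (f t - mu) <= b) ->
  Rabs lam * b <= 1/2 ->
  \big[Rplus/0]_t (p t * exp (lam * (f t - mu))) <= exp (2 * lam ^ 2 * b ^ 2).
Proof.
move=> f_b lam_b; set C := 2 * lam ^ 2 * b ^ 2.
apply: Rle_trans (_ : \big[Rplus/0]_t (p t * (1 + lam * (f t - mu) + C)) <= _).
  apply: sumR_le => t _; apply: Rmult_le_compat_l => //.
  have y_abs : Rabs (lam * (f t - mu)) <= 1/2.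
    rewrite Rabs_mult; have := Rabs_pos lam; have := Rabs_pos (f t - mu).
    have := f_b t; nra.
  have y_le : lam * (f t - mu) <= 1/2 by have := Rle_abs (lam * (f t - mu)); lra.
  apply: Rle_trans (exp_le_quadratic y_le) _.
  have : (f t - mu) ^ 2 <= b ^ 2.
    rewrite -(pow2_abs (f _ - _)); apply: pow_incr; split; [exact: Rabs_pos | exact: f_b].
  rewrite /C; have := pow2_ge_0 lam; nra.
rewrite (eq_bigr (fun t => (1 + C - lam * mu) * p t + lam * (p t * f t))); last first.
  by move=> t _; ring.
rewrite sumR_split -!sumR_distrr p_sum1 p_mean.
have := exp_ineq1_le C; lra.
Qed.

End HoeffdingLemma.

Lemma rr_scale_ge1 eps : 0 < eps -> 1 <= rr_scale eps.
Proof.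
move=> eps_gt0; have : exp 0 < exp eps by apply: exp_increasing.
rewrite exp_0 /rr_scale => e_gt1.
apply: (Rmult_le_reg_r (exp eps - 1)); first lra.
by rewrite /Rdiv Rmult_assoc Rinv_l; lra.
Qed.

Lemma Rabs_msg eps b : 0 < eps -> Rabs (msg eps b) = rr_scale eps.
Proof.
move=> /rr_scale_ge1 s_ge1; rewrite /msg.
by case: b; [rewrite Rmult_1_l Rabs_right | rewrite Rabs_left]; lra.
Qed.

Section RandomizedResponse.
Variables (eps xv : R).
Hypotheses (eps_gt0 : 0 < eps) (xv_range : -1 <= xv <= 1).

Let e_gt1 : 1 < exp eps.
Proof. by rewrite -exp_0; apply: exp_increasing. Qed.

Lemma coin_weight_ge0 c : 0 <= coin_weight eps xv c.
Proof.
have inv_gt0 : 0 < / (exp eps + 1) by apply: Rinv_0_lt_compat; lra.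
rewrite /coin_weight /Rdiv; apply: Rmult_le_pos; first by case: c.1; lra.
by case: c.2; apply: Rmult_le_pos; lra.
Qed.

Lemma sum_coin_weight : \big[Rplus/0]_c coin_weight eps xv c = 1.
Proof. by rewrite sumR_bool2 /coin_weight /=; field; lra. Qed.

Lemma coin_weight_mean :
  \big[Rplus/0]_c (coin_weight eps xv c * msg eps (honest_bit c)) = xv.
Proof. by rewrite sumR_bool2 /coin_weight /msg /rr_scale /=; field; lra. Qed.

Lemma honest_mgf_le lam : Rabs lam * (4 * rr_scale eps) <= 1 ->
  \big[Rplus/0]_c (coin_weight eps xv c * exp (lam * (msg eps (honest_bit c) - xv)))
  <= exp (8 * lam ^ 2 * rr_scale eps ^ 2).
Proof.
move=> lam_s.
have -> : 8 * lam ^ 2 * rr_scale eps ^ 2 = 2 * lam ^ 2 * (2 * rr_scale eps) ^ 2 by ring.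
apply: mgf_centered_le;
  [exact: coin_weight_ge0 | exact: sum_coin_weight | exact: coin_weight_mean | | lra].
move=> c; apply: Rle_trans (Rabs_triang _ _) _.
rewrite Rabs_Ropp Rabs_msg //; have := Rabs_le xv 1; have := rr_scale_ge1 eps_gt0; lra.
Qed.

End RandomizedResponse.

Definition coins_weight {n : nat} (eps : R) (y : 'I_n -> R)
    (coins : {ffun 'I_n -> bool * bool}) : R :=
  \big[Rmult/1]_i coin_weight eps (y i) (coins i).

Section IndependentCoins.
Variables (n : nat) (eps : R) (y : 'I_n -> R).
Hypotheses (eps_gt0 : 0 < eps) (y_range : forall i, -1 <= y i <= 1).

Lemma coins_weight_ge0 coins : 0 <= coins_weight eps y coins.
Proof. by apply: prodR_ge0 => i _; apply: coin_weight_ge0. Qed.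

Lemma sum_coins_weight : \big[Rplus/0]_coins coins_weight eps y coins = 1.
Proof.
rewrite -(bigA_distr_bigA (fun i c => coin_weight eps (y i) c)).
by rewrite big1 // => i _; apply: sum_coin_weight.
Qed.

Lemma honest_sum_mgf_le (A : {pred 'I_n}) lam : Rabs lam * (4 * rr_scale eps) <= 1 ->
  \big[Rplus/0]_coins (coins_weight eps y coins *
     exp (lam * \big[Rplus/0]_(i in A) (msg eps (honest_bit (coins i)) - y i)))
  <= exp (8 * lam ^ 2 * rr_scale eps ^ 2 * INR #|A|).
Proof.
move=> lam_s; set h := fun i c => msg eps (honest_bit c) - y i.
set F := fun i c => coin_weight eps (y i) c * (if i \in A then exp (lam * h i c) else 1).
rewrite (eq_bigr (fun coins : {ffun _ -> _} => \big[Rmult/1]_i F i (coins i))); last first.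
  move=> coins _; rewrite sumR_distrr exp_sumR big_mkcond /= -big_split.
  by apply: eq_bigr => i _; rewrite /F; case: (i \in A).
rewrite -bigA_distr_bigA Rmult_comm -sumR_const exp_sumR [X in _ <= X]big_mkcond.
apply: prodR_le => i _; split.
  apply: sumR_ge0 => c _; apply: Rmult_le_pos; first exact: coin_weight_ge0.
  by case: (i \in A); [apply: Rlt_le; apply: exp_pos | lra].
rewrite /F; case: (i \in A); first exact: honest_mgf_le.
by under eq_bigr => c _ do rewrite Rmult_1_r; rewrite sum_coin_weight; lra.
Qed.

End IndependentCoins.

Lemma card_sep_sum (T : finType) (B : {pred T}) (Q : pred T) :
  #|[set x in B | Q x]| = (\sum_(x in B) Q x)%N.
Proof.
by rewrite -sum1dep_card big_mkcondr /=; apply: eq_bigr => x _; case: (Q x).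
Qed.

Definition permute_users {n d : nat} (s : {perm 'I_n}) (g : {ffun 'I_n -> 'I_d}) :
  {ffun 'I_n -> 'I_d} := [ffun i => g (s i)].

Lemma permute_users_partitions n d s g :
  (permute_users s g \in partitions n d) = (g \in partitions n d).
Proof.
rewrite !inE; apply: eq_forallb => j; congr (_ == _).
have -> : [set i | permute_users s g i == j] = s @^-1: [set i | g i == j].
  by apply/setP => i; rewrite !inE ffunE.
exact/card_preimset/perm_inj.
Qed.

Section PartitionSampling.
Variables (n d k : nat) (j : 'I_d) (P : {set {ffun 'I_n -> 'I_d}}).
Local Notation fiber g := [set i | g i == j].
Hypotheses (n_eq : n = (k * d)%N)
  (P_perm : forall s g, (permute_users s g \in P) = (g \in P))
  (P_fiber : forall g, g \in P -> #|fiber g| = k).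
Local Notation N S := #|[set g in P | S \subset fiber g]|.

Lemma card_sub_fiber_step (S : {set 'I_n}) i0 : i0 \in S -> (N S * d <= N (S :\ i0))%N.
Proof.
move=> i0S; set S' := S :\ i0; set t := #|S'|.
have i0S' : i0 \notin S' by rewrite !inE eqxx.
set B := [set g in P | S' \subset fiber g].
pose A i1 := #|[set g in B | g i1 == j]|.
have NS : N S = A i0.
  apply: eq_card => g; rewrite !inE -(setD1K i0S) subUset sub1set inE.
  by case: (g \in P); case: (g i0 == j); rewrite ?andbT ?andbF.
(* Transposing i0 with a user i1 outside S' permutes P and exchanges the partitions
   counted by A i0 and A i1; double counting then gives (n - t) N S = (k - t) N S'. *)
have A_sym i1 : i1 \in ~: S' -> A i1 = A i0.
  rewrite inE => i1S'; pose h := @permute_users n d (tperm i0 i1).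
  have h_inv : involutive h by move=> g; apply/ffunP => i; rewrite !ffunE tpermK.
  rewrite /A -(card_preimset _ (inv_inj h_inv)); apply: eq_card => g.
  rewrite !inE P_perm ffunE tpermR; congr (_ && _ && _).
  have fix_S' i : i \in S' -> tperm i0 i1 i = i.
    by move=> iS'; apply: tpermD; [move: i0S' | move: i1S']; apply: contra => /eqP ->.
  by apply/subsetP/subsetP => sub i iS'; move: (sub i iS'); rewrite !inE ffunE fix_S'.
have A_sum : (\sum_(i1 in ~: S') A i1 = (k - t) * N S')%N.
  under eq_bigr => i1 _ do rewrite /A card_sep_sum.
  rewrite exchange_big /= mulnC -sum_nat_const; apply: eq_bigr => g.
  rewrite inE => /andP [gP S'g]; rewrite -card_sep_sum.
  have -> : [set x in ~: S' | g x == j] = fiber g :\: S'.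
    by apply/setP => i; rewrite !inE andbC.
  by rewrite cardsD (setIidPr S'g) P_fiber.
have card_compl : #|~: S'| = (n - t)%N by have := cardsC S'; rewrite card_ord; lia.
have t_lt_n : (t < n)%N.
  have : (0 < #|~: S'|)%N by apply/card_gt0P; exists i0; rewrite inE.
  by rewrite card_compl; lia.
rewrite (eq_bigr _ A_sym) sum_nat_const card_compl -NS in A_sum.
have d_gt0 : (0 < d)%N := leq_ltn_trans (leq0n j) (ltn_ord j).
rewrite -(leq_pmul2l (_ : 0 < n - t)%N) ?subn_gt0 // mulnA A_sum mulnAC mulnBl -n_eq.
by rewrite leq_mul // leq_sub2l // leq_pmulr.
Qed.

Lemma card_sub_fiber_le (S : {set 'I_n}) : (N S * d ^ #|S| <= #|P|)%N.
Proof.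
suff le_t t : forall S : {set 'I_n}, #|S| = t -> (N S * d ^ t <= #|P|)%N by exact: le_t.
elim: t => [|t IH] {}S cardS.
  by rewrite expn0 muln1; apply/subset_leq_card/subsetP => g; rewrite inE => /andP [].
have [i0 i0S] : exists i0, i0 \in S by apply/set0Pn; rewrite -card_gt0 cardS.
rewrite expnS mulnA.
apply: leq_trans (leq_mul (card_sub_fiber_step i0S) (leqnn _)) (IH _ _).
by move: cardS; rewrite (cardsD1 i0) i0S; case.
Qed.

Lemma card_sub_fiber_leR (S : {set 'I_n}) : INR (N S) <= INR #|P| * (/ INR d) ^ #|S|.
Proof.
have dR : 0 < INR d by apply/lt_0_INR/ltP; exact: leq_ltn_trans (leq0n j) (ltn_ord j).
have := card_sub_fiber_le S => /leP /le_INR; rewrite mult_INR INR_expn => NS_le.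
have dS : INR d ^ #|S| * (/ INR d) ^ #|S| = 1.
  by rewrite -Rpow_mult_distr Rinv_r ?pow1 //; lra.
rewrite -[INR (N S)]Rmult_1_r -dS -Rmult_assoc.
by apply: Rmult_le_compat_r NS_le; apply/pow_le/Rlt_le/Rinv_0_lt_compat.
Qed.

Lemma sum_partitions_prod_le (c : 'I_n -> R) : (forall i, 0 <= c i) ->
  \big[Rplus/0]_(g in P) \big[Rmult/1]_(i in fiber g) (1 + c i)
  <= INR #|P| * \big[Rmult/1]_(i < n) (1 + c i / INR d).
Proof.
(* Expanding each product over the subsets S of group j, the monomial of S is counted
   for N S <= |P| d^-|S| partitions. *)
move=> c_ge0.
under eq_bigr => g _ do rewrite prodR_add1_subsets big_mkcond /=.
rewrite exchange_big.
apply: Rle_trans (_ : \big[Rplus/0]_(S : {set 'I_n})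
    (INR #|P| * \big[Rmult/1]_(i in S) (c i / INR d)) <= _).
  apply: sumR_le => S _.
  have -> : \big[Rplus/0]_(g in P)
      (if S \subset fiber g then \big[Rmult/1]_(i in S) c i else 0) =
      INR (N S) * \big[Rmult/1]_(i in S) c i.
    rewrite -sumR_const big_mkcond [RHS]big_mkcond; apply: eq_bigr => g _.
    by rewrite inE; case: (g \in P).
  rewrite /Rdiv big_split prodR_const.
  have prod_ge0 : 0 <= \big[Rmult/1]_(i in S) c i by apply: prodR_ge0 => i _; exact: c_ge0.
  apply: Rle_trans (Rmult_le_compat_r _ _ _ prod_ge0 (card_sub_fiber_leR S)) _.
  by rewrite Rmult_assoc (Rmult_comm (_ ^ _)); right.
rewrite -sumR_distrr (eq_bigl (fun S : {set 'I_n} => S \subset [set: 'I_n])); last first.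
  by move=> S; rewrite subsetT.
rewrite -prodR_add1_subsets; right; congr (_ * _).
by apply: eq_bigl => i; rewrite inE.
Qed.

Lemma partition_mgf_le (v : 'I_n -> R) lam :
  (forall i, 0 <= v i <= 1) -> 0 <= lam <= 1/2 ->
  \big[Rplus/0]_(g in P) exp (lam * \big[Rplus/0]_(i < n | g i == j) v i)
  <= INR #|P| * exp (lam * (/ INR d * \big[Rplus/0]_(i < n) v i) + 2 * lam ^ 2 * INR k).
Proof.
move=> v_range lam_range.
have dR : 0 < INR d by apply/lt_0_INR/ltP; exact: leq_ltn_trans (leq0n j) (ltn_ord j).
pose c i := exp (lam * v i) - 1.
have c_ge0 i : 0 <= c i.
  by have := exp_ineq1_le (lam * v i); have := v_range i; rewrite /c; nra.
have c_le i : c i <= lam * v i + 2 * lam ^ 2.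
  have := v_range i => v_i.
  have := @exp_le_quadratic (lam * v i) ltac:(nra).
  have : (lam * v i) ^ 2 <= lam ^ 2 by apply: pow_incr; nra.
  by rewrite /c; lra.
have expand g : exp (lam * \big[Rplus/0]_(i < n | g i == j) v i) =
    \big[Rmult/1]_(i in fiber g) (1 + c i).
  by rewrite sumR_distrr exp_sumR; apply: eq_big => [i | i _]; rewrite ?inE // /c; lra.
under eq_bigr => g _ do rewrite expand.
apply: Rle_trans (sum_partitions_prod_le c_ge0) _.
apply: Rmult_le_compat_l; first exact: pos_INR.
apply: Rle_trans (_ : _ <= \big[Rmult/1]_(i < n) exp (c i / INR d)) _.
  apply: prodR_le => i _; have := exp_ineq1_le (c i / INR d).
  have : 0 <= c i / INR d.
    by apply: Rmult_le_pos; [exact: c_ge0 | apply/Rlt_le/Rinv_0_lt_compat].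
  lra.
rewrite -exp_sumR; apply: exp_le.
have -> : \big[Rplus/0]_(i < n) (c i / INR d) = / INR d * \big[Rplus/0]_(i < n) c i.
  by rewrite sumR_distrr; apply: eq_bigr => i _; rewrite /Rdiv Rmult_comm.
have : \big[Rplus/0]_(i < n) c i <= lam * \big[Rplus/0]_(i < n) v i + INR n * (2 * lam ^ 2).
  by rewrite sumR_distrr -sumR_const_ord -sumR_split; apply: sumR_le => i _; apply: c_le.
have -> : INR n = INR k * INR d by rewrite n_eq mult_INR.
move=> /(Rmult_le_compat_l (/ INR d)) sum_le.
apply: Rle_trans (sum_le (Rlt_le _ _ (Rinv_0_lt_compat _ dR))) _.
by right; field; lra.
Qed.
End PartitionSampling.

Section BalancedPartitions.
Variables (n d k : nat).
Hypotheses (d_gt0 : (0 < d)%N) (n_eq : n = (k * d)%N).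

Lemma card_fiber_partitions g j :
  g \in partitions n d -> #|[set i | g i == j]| = k.
Proof. by rewrite inE => /forallP /(_ j) /eqP ->; rewrite n_eq mulnK. Qed.

Hypothesis k_gt0 : (0 < k)%N.

Let block_lt (i : 'I_n) : (i %/ k < d)%N.
Proof. by rewrite ltn_divLR // mulnC -n_eq. Qed.

Let block_elt_lt (j : 'I_d) (t : 'I_k) : (j * k + t < n)%N.
Proof.
rewrite n_eq; apply: (@leq_trans (j * k + k)); first by rewrite ltn_add2l.
by rewrite -mulSnr mulnC leq_mul2l ltn_ord orbT.
Qed.

Lemma partitions_nonempty : (0 < #|partitions n d|)%N.
Proof.
pose g0 : {ffun 'I_n -> 'I_d} := [ffun i => Ordinal (block_lt i)].
apply/card_gt0P; exists g0; rewrite inE; apply/forallP => j.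
pose h (t : 'I_k) : 'I_n := Ordinal (block_elt_lt j t).
have h_inj : injective h by move=> t1 t2 /(congr1 val) /= /addnI /val_inj.
have -> : [set i | g0 i == j] = h @: [set: 'I_k].
  apply/setP => i; rewrite inE ffunE; apply/eqP/imsetP => [ij | [t _ ->]].
    exists (Ordinal (ltn_pmod i k_gt0)); first by rewrite inE.
    apply: val_inj => /=; rewrite {1}(divn_eq i k); congr (_ * _ + _)%N.
    by have := congr1 val ij.
  by apply: val_inj => /=; rewrite divnMDl // divn_small // addn0.
by rewrite card_imset // cardsT card_ord n_eq mulnK.
Qed.

End BalancedPartitions.

Lemma linf_lt d (v : 'I_d -> R) B : 0 < B -> (forall j, Rabs (v j) < B) -> linf v < B.
Proof.
move=> B_gt0 v_lt; rewrite /linf; apply: (big_ind (fun a => a < B)) => //.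
by move=> a b; apply: Rmax_lub_lt.
Qed.

Definition group_dev {n d : nat} (g : {ffun 'I_n -> 'I_d}) (j : 'I_d) (v : 'I_n -> R) : R :=
  \big[Rplus/0]_(i < n | g i == j) v i - / INR d * \big[Rplus/0]_(i < n) v i.

Lemma group_dev_affine n d k g j (w v : 'I_n -> R) a b :
  n = (k * d)%N -> g \in partitions n d -> (forall i, w i = a * v i + b) ->
  group_dev g j w = a * group_dev g j v.
Proof.
move=> n_eq gP wE; have d_gt0 : (0 < d)%N := leq_ltn_trans (leq0n j) (ltn_ord j).
have dR : 0 < INR d by apply/lt_0_INR/ltP.
rewrite /group_dev !(eq_bigr _ (fun i _ => wE i)) !sumR_split -!sumR_distrr sumR_const_ord.
have -> : \big[Rplus/0]_(i < n | g i == j) b = INR k * b.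
  rewrite -(card_fiber_partitions d_gt0 n_eq j gP) -sumR_const.
  by apply: eq_bigl => i; rewrite inE.
have -> : INR n = INR k * INR d by rewrite n_eq mult_INR.
(* [set] merges syntactically different elaborations of the same sums for [field]. *)
set S1 := \big[Rplus/0]_(i < n | g i == j) v i; set S2 := \big[Rplus/0]_(i < n) v i.
field; lra.
Qed.

Section ManipulationExperiment.
Variables (eps : R) (n d k m : nat) (x : 'I_n -> 'I_d -> R).
Hypotheses (eps_gt0 : 0 < eps) (d_gt0 : (0 < d)%N) (k_gt0 : (0 < k)%N)
  (n_eq : n = (k * d)%N) (x_range : forall i j, -1 <= x i j <= 1).
Local Notation P := (partitions n d).
Local Notation s := (rr_scale eps).
Local Notation kR := (INR k).

Let dR : 0 < INR d. Proof. exact/lt_0_INR/ltP. Qed.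
Let kR_gt0 : 0 < kR. Proof. exact/lt_0_INR/ltP. Qed.
Let nR : INR n = kR * INR d. Proof. by rewrite n_eq mult_INR. Qed.
Let PR : 0 < INR #|P|.
Proof. exact/lt_0_INR/ltP/(partitions_nonempty d_gt0 n_eq k_gt0). Qed.
Let s_ge1 : 1 <= s. Proof. exact: rr_scale_ge1. Qed.
Let mn_ge0 : 0 <= INR m / INR n.
Proof. by apply: Rmult_le_pos; [exact: pos_INR | apply/Rlt_le/Rinv_0_lt_compat; nra]. Qed.

(* Expectation over the uniform public partition and the honest users' coins, in the
   exact shape of the inner sums of manip_prob. *)
Definition experiment_mean
    (F : {ffun 'I_n -> 'I_d} -> {ffun 'I_n -> bool * bool} -> R) : R :=
  \big[Rplus/0]_(g in P) (/ INR #|P| *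
    \big[Rplus/0]_coins (coins_weight eps (fun i => x i (g i)) coins * F g coins)).

Local Notation E := experiment_mean.

Lemma eq_experiment_mean F G : (forall g c, F g c = G g c) -> E F = E G.
Proof.
by move=> FG; apply: eq_bigr => g _; congr (_ * _); apply: eq_bigr => c _; rewrite FG.
Qed.

Lemma experiment_meanD F G :
  E (fun g c => F g c + G g c) = E F + E G.
Proof.
rewrite /E -sumR_split; apply: eq_bigr => g _.
by rewrite -Rmult_plus_distr_l -sumR_split; congr (_ * _); apply: eq_bigr => c _; ring.
Qed.

Lemma experiment_meanB F G :
  E (fun g c => F g c - G g c) = E F - E G.
Proof.
have := experiment_meanD (fun g c => F g c - G g c) G.
rewrite (@eq_experiment_mean _ F) => [|g c]; [lra | ring].
Qed.

Lemma experiment_mean_sum (I : finType) (F : I -> _ -> _ -> R) :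
  E (fun g c => \big[Rplus/0]_i F i g c) = \big[Rplus/0]_i E (F i).
Proof.
rewrite /E exchange_big; apply: eq_bigr => g _; rewrite -sumR_distrr exchange_big.
by congr (_ * _); apply: eq_bigr => c _; rewrite sumR_distrr.
Qed.

Lemma experiment_mean_le F G : (forall g c, g \in P -> F g c <= G g c) -> E F <= E G.
Proof.
move=> FG; apply: sumR_le => g gP; apply: Rmult_le_compat_l.
  by apply/Rlt_le/Rinv_0_lt_compat.
apply: sumR_le => c _; apply: Rmult_le_compat_l; last exact: FG.
by apply: coins_weight_ge0.
Qed.

Lemma experiment_mean_partition (F : {ffun 'I_n -> 'I_d} -> R) :
  E (fun g _ => F g) = / INR #|P| * \big[Rplus/0]_(g in P) F g.
Proof.
rewrite /E sumR_distrr; apply: eq_bigr => g _.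
by rewrite -sumR_distrl sum_coins_weight ?Rmult_1_l.
Qed.

Lemma experiment_mean_const a : E (fun _ _ => a) = a.
Proof. by rewrite experiment_mean_partition sumR_const; field; lra. Qed.

Lemma experiment_mean_group_dev j (v : 'I_n -> R) lam mu :
  (forall i, 0 <= v i <= 1) -> 0 <= lam <= 1/2 ->
  E (fun g _ => exp (lam * group_dev g j v - mu)) <= exp (2 * lam ^ 2 * kR - mu).
Proof.
move=> v_range lam_range; rewrite experiment_mean_partition.
under eq_bigr => g _ do rewrite /group_dev exp_shift.
have mgf := partition_mgf_le n_eq (@permute_users_partitions n d)
  (fun g => @card_fiber_partitions n d k d_gt0 n_eq g j) v_range lam_range.
rewrite -sumR_distrl -Rmult_assoc.
apply: Rle_trans (Rmult_le_compat_r _ _ _ (Rlt_le _ _ (exp_pos _))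
  (Rmult_le_compat_l _ _ _ (Rlt_le _ _ (Rinv_0_lt_compat _ PR)) mgf)) _.
rewrite -Rmult_assoc Rinv_l ?Rmult_1_l -?exp_plus; last lra.
by right; congr exp; ring.
Qed.

Lemma experiment_mean_coins_le F b :
  (forall g, g \in P -> \big[Rplus/0]_coins
     (coins_weight eps (fun i => x i (g i)) coins * F g coins) <= b) ->
  E F <= b.
Proof.
move=> F_le; apply: Rle_trans (_ : \big[Rplus/0]_(g in P) (/ INR #|P| * b) <= _).
  apply: sumR_le => g gP; apply: Rmult_le_compat_l; last exact: F_le.
  by apply/Rlt_le/Rinv_0_lt_compat.
by rewrite sumR_const; right; field; lra.
Qed.

Definition honest_dev g (coins : {ffun 'I_n -> bool * bool}) (j : 'I_d) : R :=
  \big[Rplus/0]_(i < n | g i == j) (msg eps (honest_bit (coins i)) - x i j).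

Lemma experiment_mean_honest_dev j lam mu : Rabs lam * (4 * s) <= 1 ->
  E (fun g c => exp (lam * honest_dev g c j - mu)) <= exp (8 * lam ^ 2 * s ^ 2 * kR - mu).
Proof.
move=> lam_s; apply: experiment_mean_coins_le => g gP.
have fiber_k : #|[set i | g i == j]| = k by apply: card_fiber_partitions.
have -> : \big[Rplus/0]_coins (coins_weight eps (fun i => x i (g i)) coins *
      exp (lam * honest_dev g coins j - mu)) =
    \big[Rplus/0]_coins (coins_weight eps (fun i => x i (g i)) coins *
      exp (lam * \big[Rplus/0]_(i in [set i | g i == j])
        (msg eps (honest_bit (coins i)) - x i (g i)))) * exp (- mu).
  rewrite sumR_distrl; apply: eq_bigr => c _; rewrite Rmult_assoc -exp_plus /honest_dev.
  congr (_ * exp (_ * _ + _)); apply: eq_big => [i | i /eqP ->]; by rewrite ?inE.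
rewrite /Rminus exp_plus -fiber_k; apply: Rmult_le_compat_r; first exact/Rlt_le/exp_pos.
by apply: honest_sum_mgf_le => // i; apply: x_range.
Qed.

Definition corrupt_ind (a : attacker n d) (i : 'I_n) : R := if i \in a.1 then 1 else 0.

Lemma sum_corrupt_ind (a : attacker n d) :
  #|a.1| = m -> \big[Rplus/0]_(i < n) corrupt_ind a i = INR m.
Proof.
by move=> <-; rewrite -(Rmult_1_r (INR _)) -sumR_const [RHS]big_mkcond.
Qed.

Lemma manip_output_sub_mean (a : attacker n d) g coins j : g \in P ->
  manip_output eps a g coins j - mean x j =
  / kR * (\big[Rplus/0]_(i < n | g i == j)
            (msg eps (if i \in a.1 then a.2 g i else honest_bit (coins i)) -
             msg eps (honest_bit (coins i)))
          + honest_dev g coins j + group_dev g j (fun i => x i j)).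
Proof.
move=> gP; rewrite /manip_output /mean /honest_dev /group_dev.
rewrite -sumR_split.
set SA := (X in / kR * (X + _)); set SX := (X in _ + (X - _)).
have -> : \big[Rplus/0]_(i | g i == j)
    msg eps (if i \in a.1 then a.2 g i else honest_bit (coins i)) = SA + SX.
  by rewrite /SA /SX -sumR_split; apply: eq_bigr => i _ /=; ring.
by rewrite nR; field; lra.
Qed.

Lemma Rabs_corruption_error_le (a : attacker n d) (g : {ffun 'I_n -> 'I_d}) coins j :
  Rabs (\big[Rplus/0]_(i < n | g i == j)
          (msg eps (if i \in a.1 then a.2 g i else honest_bit (coins i)) -
           msg eps (honest_bit (coins i))))
  <= 2 * s * \big[Rplus/0]_(i < n | g i == j) corrupt_ind a i.
Proof.
apply: Rle_trans (Rabs_sumR_le _ _ _) _; rewrite sumR_distrr; apply: sumR_le => i _.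
rewrite /corrupt_ind; case: (i \in a.1); last by rewrite Rminus_diag Rabs_R0; lra.
by apply: Rle_trans (Rabs_triang _ _) _; rewrite Rabs_Ropp !Rabs_msg //; lra.
Qed.

Lemma Rabs_manip_deviation_lt (a : attacker n d) (g : {ffun 'I_n -> 'I_d}) coins j q :
  g \in P -> #|a.1| = m ->
  group_dev g j (corrupt_ind a) < 3 * kR * q ->
  group_dev g j (fun i => (1 + x i j) / 2) < 3 * kR * q ->
  group_dev g j (fun i => (1 - x i j) / 2) < 3 * kR * q ->
  Rabs (honest_dev g coins j) < 6 * s * kR * q ->
  Rabs (manip_output eps a g coins j - mean x j) < 2 * s * (INR m / INR n) + 18 * s * q.
Proof.
move=> gP a_m dev_C dev_p dev_m dev_H.
have dev_x : Rabs (group_dev g j (fun i => x i j)) < 6 * kR * q.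
  have x_dev w c0 c1 : (forall i, w i = c0 * x i j + c1) ->
      group_dev g j w = c0 * group_dev g j (fun i => x i j).
    by move=> wE; apply: group_dev_affine n_eq gP wE.
  rewrite (x_dev _ (/ 2) (/ 2)) in dev_p; last by move=> i; lra.
  rewrite (x_dev _ (- / 2) (/ 2)) in dev_m; last by move=> i; lra.
  by apply: Rabs_def1; lra.
have corrupt_sum : \big[Rplus/0]_(i < n | g i == j) corrupt_ind a i =
    group_dev g j (corrupt_ind a) + / INR d * INR m.
  by rewrite /group_dev sum_corrupt_ind //; ring.
have := Rabs_corruption_error_le a g coins j; rewrite corrupt_sum => err.
rewrite manip_output_sub_mean // Rabs_mult Rabs_right; last first.
  exact/Rle_ge/Rlt_le/Rinv_0_lt_compat.
have q_gt0 : 0 < q.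
  have : 0 < 6 * s * kR * q by have := Rabs_pos (honest_dev g coins j); lra.
  by move=> pos; apply: (Rmult_lt_reg_l (6 * s * kR)); [nra | lra].
set A := \big[Rplus/0]_(i < n | g i == j) _ in err *.
have sum_lt : Rabs (A + honest_dev g coins j + group_dev g j (fun i => x i j)) <
    2 * s * (3 * kR * q + / INR d * INR m) + 6 * s * kR * q + 6 * kR * q.
  have := Rabs_triang (A + honest_dev g coins j) (group_dev g j (fun i => x i j)).
  have := Rabs_triang A (honest_dev g coins j).
  have : 2 * s * (group_dev g j (corrupt_ind a) + / INR d * INR m) <
         2 * s * (3 * kR * q + / INR d * INR m) by apply: Rmult_lt_compat_l; lra.
  lra.
apply: Rlt_le_trans (Rmult_lt_compat_l _ _ _ (Rinv_0_lt_compat _ kR_gt0) sum_lt) _.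
have -> : / kR * (2 * s * (3 * kR * q + / INR d * INR m) + 6 * s * kR * q + 6 * kR * q) =
    2 * s * (INR m / INR n) + 12 * s * q + 6 * q by rewrite nR; field; lra.
nra.
Qed.

Lemma Rabs_manip_deviation_le (a : attacker n d) g coins j : g \in P ->
  Rabs (manip_output eps a g coins j - mean x j) <= 2 * s.
Proof.
move=> gP; have nR_gt0 : 0 < INR n by rewrite nR; apply: Rmult_lt_0_compat.
have output_le : Rabs (manip_output eps a g coins j) <= s.
  rewrite /manip_output Rabs_mult Rabs_right; last first.
    by apply/Rle_ge/Rlt_le/Rdiv_lt_0_compat.
  apply: Rle_trans (_ : INR d / INR n * (kR * s) <= _); last first.
    by right; rewrite nR; field; lra.
  apply: Rmult_le_compat_l; first by apply/Rlt_le/Rdiv_lt_0_compat.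
  apply: Rle_trans (Rabs_sumR_le _ _ _) _.
  rewrite -(card_fiber_partitions d_gt0 n_eq j gP) -sumR_const.
  have -> : \big[Rplus/0]_(i in [set i | g i == j]) s = \big[Rplus/0]_(i | g i == j) s.
    by apply: eq_bigl => i; rewrite inE.
  by apply: sumR_le => i _; rewrite Rabs_msg //; lra.
have mean_le : Rabs (mean x j) <= 1.
  rewrite /mean Rabs_mult Rabs_right; last by apply/Rle_ge/Rlt_le/Rinv_0_lt_compat.
  apply: Rle_trans (_ : / INR n * (INR n * 1) <= _); last by right; field; lra.
  apply: Rmult_le_compat_l; first by apply/Rlt_le/Rinv_0_lt_compat.
  apply: Rle_trans (Rabs_sumR_le _ _ _) _; rewrite -sumR_const_ord.
  by apply: sumR_le => i _; apply: Rabs_le; apply: x_range.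
by apply: Rle_trans (Rabs_triang _ _) _; rewrite Rabs_Ropp; lra.
Qed.

Definition success_ind B (a : attacker n d) g coins : R :=
  indicator (Rlt_dec (linf (fun j => manip_output eps a g coins j - mean x j)) B).

(* Exponential moments of the five tail events of coordinate j: too many corrupted users
   in group j, large sampling error of the halves (1 + x)/2 and (1 - x)/2 of the data,
   and the two tails of the honest noise. *)
Definition chernoff_terms q (a : attacker n d) g coins j : R :=
  exp (q / 2 * group_dev g j (corrupt_ind a) - q / 2 * (3 * kR * q))
  + exp (q / 2 * group_dev g j (fun i => (1 + x i j) / 2) - q / 2 * (3 * kR * q))
  + exp (q / 2 * group_dev g j (fun i => (1 - x i j) / 2) - q / 2 * (3 * kR * q))
  + exp (q / (4 * s) * honest_dev g coins j - q / (4 * s) * (6 * s * kR * q))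
  + exp (- (q / (4 * s)) * honest_dev g coins j - q / (4 * s) * (6 * s * kR * q)).

Lemma success_ind_ge q B (a : attacker n d) g coins :
  g \in P -> #|a.1| = m -> 0 < q -> 2 * s * (INR m / INR n) + 18 * s * q <= B ->
  1 - \big[Rplus/0]_j chernoff_terms q a g coins j <= success_ind B a g coins.
Proof.
move=> gP a_m q_gt0 B_ge.
have terms_ge0 j : 0 <= chernoff_terms q a g coins j.
  rewrite /chernoff_terms; set t1 := exp _; set t2 := exp _; set t3 := exp _.
  set t4 := exp _; set t5 := exp _.
  have [p1 p2 p3 p4 p5] : [/\ 0 < t1, 0 < t2, 0 < t3, 0 < t4 & 0 < t5].
    by split; apply: exp_pos.
  lra.
set S := \big[Rplus/0]_j _.
have S_ge0 : 0 <= S by apply: sumR_ge0 => j _; apply: terms_ge0.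
rewrite /success_ind /indicator; case: Rlt_dec => [success | fail] /=; first lra.
case: (Rle_lt_dec 1 S) => [| sum_lt1]; first lra.
exfalso; apply: fail; apply: linf_lt => [|j]; first nra.
have : chernoff_terms q a g coins j < 1.
  apply: Rle_lt_trans sum_lt1; rewrite /S (bigD1 j) //=.
  rewrite -[X in X <= _]Rplus_0_r; apply: Rplus_le_compat_l.
  by apply: sumR_ge0 => i _; apply: terms_ge0.
rewrite /chernoff_terms; set t1 := exp _; set t2 := exp _; set t3 := exp _.
set t4 := exp _; set t5 := exp _ => terms_lt1.
have [p1 p2 p3 p4 p5] : [/\ 0 < t1, 0 < t2, 0 < t3, 0 < t4 & 0 < t5].
  by split; apply: exp_pos.
have lp_ge0 : 0 <= q / 2 by lra.
have lh_ge0 : 0 <= q / (4 * s).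
  by apply: Rmult_le_pos; [lra | apply/Rlt_le/Rinv_0_lt_compat; lra].
apply: Rlt_le_trans B_ge; apply: Rabs_manip_deviation_lt => //.
- by apply: (lt_of_exp_lt1 lp_ge0); rewrite -/t1; lra.
- by apply: (lt_of_exp_lt1 lp_ge0); rewrite -/t2; lra.
- by apply: (lt_of_exp_lt1 lp_ge0); rewrite -/t3; lra.
apply: Rabs_def1; first by apply: (lt_of_exp_lt1 lh_ge0); rewrite -/t4; lra.
apply: Ropp_lt_cancel; rewrite Ropp_involutive.
by apply: (lt_of_exp_lt1 lh_ge0); rewrite -Ropp_mult_distr_r Ropp_mult_distr_l -/t5; lra.
Qed.

Lemma experiment_mean_chernoff q (a : attacker n d) j : 0 < q <= 1 ->
  E (fun g c => chernoff_terms q a g c j) <= 5 * exp (- (kR * q ^ 2)).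
Proof.
move=> q_range; rewrite /chernoff_terms !experiment_meanD.
set lh := q / (4 * s); set th := lh * (6 * s * kR * q); set tp := q / 2 * (3 * kR * q).
have lh_abs : Rabs lh = lh.
  by apply/Rabs_right/Rle_ge/Rmult_le_pos; [lra | apply/Rlt_le/Rinv_0_lt_compat; lra].
have lh_s : Rabs lh * (4 * s) <= 1 by rewrite lh_abs /lh; field_simplify; lra.
have lh_s' : Rabs (- lh) * (4 * s) <= 1 by rewrite Rabs_Ropp.
have exp_p : 2 * (q / 2) ^ 2 * kR - tp = - (kR * q ^ 2) by rewrite /tp; field.
have exp_h lam : Rabs lam = lh -> 8 * lam ^ 2 * s ^ 2 * kR - th = - (kR * q ^ 2).
  by move=> lam_lh; rewrite -(pow2_abs lam) lam_lh /th /lh; field; lra.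
have lam_p : 0 <= q / 2 <= 1 / 2 by lra.
have range_p i : 0 <= (1 + x i j) / 2 <= 1 by have := x_range i j; lra.
have range_m i : 0 <= (1 - x i j) / 2 <= 1 by have := x_range i j; lra.
have range_C i : 0 <= corrupt_ind a i <= 1 by rewrite /corrupt_ind; case: (i \in a.1); lra.
have := experiment_mean_group_dev j tp range_C lam_p.
have := experiment_mean_group_dev j tp range_p lam_p.
have := experiment_mean_group_dev j tp range_m lam_p.
have := experiment_mean_honest_dev j th lh_s.
have := experiment_mean_honest_dev j th lh_s'.
rewrite exp_p (exp_h _ lh_abs) (exp_h (- lh)) ?Rabs_Ropp //; lra.
Qed.

Theorem experiment_success_ge q B (a : attacker n d) :
  #|a.1| = m -> 0 < q -> 2 * s * (INR m / INR n) + 18 * s * q <= B ->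
  1 - 5 * INR d * exp (- (kR * q ^ 2)) <= E (success_ind B a).
Proof.
move=> a_m q_gt0 B_ge; have exp_ge0 := Rlt_le _ _ (exp_pos (- (kR * q ^ 2))).
case: (Rle_lt_dec q 1) => [q_le1 | q_gt1].
  have := experiment_mean_le (fun g c gP => success_ind_ge c gP a_m q_gt0 B_ge).
  apply: Rle_trans.
  rewrite experiment_meanB experiment_mean_const experiment_mean_sum.
  apply: Rplus_le_compat_l; apply: Ropp_le_contravar.
  apply: Rle_trans (_ : \big[Rplus/0]_(j < d) (5 * exp (- (kR * q ^ 2))) <= _).
    by apply: sumR_le => j _; apply: experiment_mean_chernoff; lra.
  by rewrite sumR_const_ord; right; ring.
(* For q > 1 the threshold exceeds the trivial bound 2s on the error. *)
apply: Rle_trans (_ : _ <= 1) _; first by have := pos_INR d; nra.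
rewrite -[X in X <= _](experiment_mean_const 1); apply: experiment_mean_le => g c gP.
rewrite /success_ind /indicator; case: Rlt_dec => [success | fail] /=; first lra.
exfalso; apply: fail; apply: linf_lt => [|j]; first nra.
apply: Rle_lt_trans (Rabs_manip_deviation_le a c j gP) _; nra.
Qed.

End ManipulationExperiment.

Lemma manip_prob_ge n d m eps x (w : attacker n d -> R) B p :
  oblivious_attacker m w ->
  (forall a : attacker n d, #|a.1| = m ->
     p <= experiment_mean eps x (success_ind eps x B a)) ->
  manip_prob eps x w B >= p.
Proof.
case=> w_ge0 [w_sum1 w_m] success_ge; apply: Rle_ge.
apply: Rle_trans (_ : \big[Rplus/0]_a (w a * p) <= _).
  by rewrite -sumR_distrl w_sum1; lra.
apply: sumR_le => a _; case: (Req_dec (w a) 0) => [-> | wa_neq0]; first lra.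
exact: Rmult_le_compat_l (w_ge0 a) (success_ge a (w_m a wa_neq0)).
Qed.

Lemma ln_scale_le beta D : 0 < beta < 1 -> 1 <= D ->
  ln (5 * D / beta) <= (1 + ln 5 / ln (/ beta)) * ln (D / beta).
Proof.
move=> beta_range D_ge1.
have inv_gt1 : 1 < / beta by rewrite -Rinv_1; apply: Rinv_lt_contravar; lra.
have Lb_gt0 : 0 < ln (/ beta) by rewrite -ln_1; apply: ln_increasing; lra.
have L_ge : ln (/ beta) <= ln (D * / beta).
  apply: ln_le; first lra.
  by rewrite -{1}(Rmult_1_l (/ beta)); apply: Rmult_le_compat_r; lra.
have ratio_ge1 : 1 <= ln (D * / beta) / ln (/ beta).
  by apply: (Rmult_le_reg_r (ln (/ beta))); rewrite // /Rdiv Rmult_assoc Rinv_l; lra.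
have ln5_gt0 : 0 < ln 5 by rewrite -ln_1; apply: ln_increasing; lra.
rewrite /Rdiv Rmult_assoc ln_mult; [|lra|apply: Rmult_lt_0_compat; lra].
have -> : (1 + ln 5 * / ln (/ beta)) * ln (D * / beta) =
    ln (D * / beta) + ln 5 * (ln (D * / beta) / ln (/ beta)) by field; lra.
nra.
Qed.

Section ChernoffRadius.
Variables (beta : R) (n d k : nat).
Hypotheses (beta_range : 0 < beta < 1) (d_gt0 : (0 < d)%N) (k_gt0 : (0 < k)%N)
  (n_eq : n = (k * d)%N).
Local Notation A := (1 + ln 5 / ln (/ beta)).
Local Notation q := (sqrt (ln (5 * INR d / beta) / INR k)).
Local Notation tau := (sqrt (INR d / INR n * ln (INR d / beta))).

Let dR : 1 <= INR d. Proof. by apply: (le_INR 1); apply/leP. Qed.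
Let kR : 0 < INR k. Proof. exact/lt_0_INR/ltP. Qed.
Let nR : INR n = INR k * INR d. Proof. by rewrite n_eq mult_INR. Qed.

Let ln_ratio_gt0 : 0 < ln (5 * INR d / beta).
Proof.
rewrite -ln_1; apply: ln_increasing; first lra.
by apply: (Rmult_lt_reg_r beta); [lra | rewrite /Rdiv Rmult_assoc Rinv_l; lra].
Qed.

Let A_ge1 : 1 <= A.
Proof.
have : 0 <= ln 5 / ln (/ beta); last lra.
apply: Rmult_le_pos; first by rewrite -ln_1; apply: ln_le; lra.
apply/Rlt_le/Rinv_0_lt_compat; rewrite -ln_1; apply: ln_increasing; first lra.
by rewrite -Rinv_1; apply: Rinv_lt_contravar; lra.
Qed.

Lemma chernoff_radius_gt0 : 0 < q.
Proof. exact/sqrt_lt_R0/Rdiv_lt_0_compat. Qed.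

Lemma exp_chernoff_radius : 5 * INR d * exp (- (INR k * q ^ 2)) = beta.
Proof.
rewrite pow2_sqrt; last exact/Rlt_le/Rdiv_lt_0_compat.
have -> : INR k * (ln (5 * INR d / beta) / INR k) = ln (5 * INR d / beta) by field; lra.
by rewrite exp_Ropp exp_ln; [field; lra | apply: Rdiv_lt_0_compat; lra].
Qed.

Lemma chernoff_radius_le : q <= sqrt A * tau.
Proof.
have L_ge0 : 0 <= ln (INR d / beta).
  rewrite -ln_1; apply: ln_le; first lra.
  by apply: (Rmult_le_reg_r beta); [lra | rewrite /Rdiv Rmult_assoc Rinv_l; lra].
have -> : INR d / INR n = / INR k by rewrite nR; field; lra.
rewrite -sqrt_mult; [| lra | by apply: Rmult_le_pos; [apply/Rlt_le/Rinv_0_lt_compat|]].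
apply: sqrt_le_1_alt; rewrite /Rdiv (Rmult_comm (/ INR k)) -Rmult_assoc.
apply: Rmult_le_compat_r; first by apply/Rlt_le/Rinv_0_lt_compat.
exact: ln_scale_le.
Qed.

Lemma chernoff_threshold_ge eps m : 0 < eps ->
  2 * rr_scale eps * (INR m / INR n) + 18 * rr_scale eps * q <=
  20 * sqrt A * rr_scale eps * (tau + INR m / INR n).
Proof.
move=> eps_gt0; have s_ge1 := rr_scale_ge1 eps_gt0.
have sqrtA_ge1 : 1 <= sqrt A by rewrite -[X in X <= _]sqrt_1; apply: sqrt_le_1_alt.
have mn_ge0 : 0 <= rr_scale eps * (INR m / INR n).
  apply/Rmult_le_pos/Rmult_le_pos; [lra | exact: pos_INR |].
  by apply/Rlt_le/Rinv_0_lt_compat; rewrite nR; nra.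
have := Rmult_le_compat_l _ _ _ (Rle_trans _ _ _ Rle_0_1 s_ge1) chernoff_radius_le.
have := Rmult_le_compat_r _ _ _ mn_ge0 sqrtA_ge1.
have := Rmult_le_pos _ _ (Rle_trans _ _ _ Rle_0_1 s_ge1) (Rlt_le _ _ chernoff_radius_gt0).
lra.
Qed.

End ChernoffRadius.

Theorem mainTheorem10 :
  forall beta : R, 0 < beta < 1 ->
  exists c : R,
  forall (eps : R) (n d m : nat),
    0 < eps ->
    (0 < d)%N -> (0 < m)%N -> (m <= n)%N -> (d %| n)%N ->
    forall x : 'I_n -> 'I_d -> R,
    (forall i j, -1 <= x i j <= 1) ->
    forall w : attacker n d -> R,
    oblivious_attacker m w ->
    manip_prob eps x w
      (c * rr_scale eps *
         (sqrt (INR d / INR n * ln (INR d / beta)) + INR m / INR n))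
    >= 1 - beta.
Proof.
move=> beta beta_range; exists (20 * sqrt (1 + ln 5 / ln (/ beta))).
move=> eps n d m eps_gt0 d_gt0 m_gt0 m_le_n d_dvd_n x x_range w w_oblivious.
set k := (n %/ d)%N; have n_eq : n = (k * d)%N by rewrite divnK.
have k_gt0 : (0 < k)%N.
  by have := leq_trans m_gt0 m_le_n; rewrite n_eq muln_gt0 => /andP [].
apply: manip_prob_ge w_oblivious _ => a a_m.
rewrite -[X in 1 - X](exp_chernoff_radius beta_range d_gt0 k_gt0).
apply: (experiment_success_ge eps_gt0 d_gt0 k_gt0 n_eq x_range a_m).
  exact: chernoff_radius_gt0.
exact: chernoff_threshold_ge.
Qed.
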